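(* Let $n\ge 2$, let $A\in\mathbb{R}^{n\times n}$ be symmetric positive definite, $B=A^{1/2}$, and $E=\{x\in\mathbb{R}^n: x^{\top}A^{-1}x=1\}$. For every parallelepiped $P$ inscribed in $E$, \[ L(P)\ \le\ L_{\max}(E):=2^{n}\sqrt{\operatorname{tr}(A)}. \] Equality holds if and only if the edge vectors of $P$ are $v_i=\lambda_iBu_i$ where $U=[u_1\ \cdots\ u_n]\in O(n)$, $\lambda_i>0$, $\sum_i\lambda_i^2=4$, and \[ \lambda_i\ \propto\ \sqrt{u_i^{\top}A\,u_i}\qquad(i=1,\dots,n). \] In particular, for any $U\in O(n)$ the choice \[ \lambda_i=\frac{2\,\sqrt{u_i^{\top}A\,u_i}}{\sqrt{\operatorname{tr}(A)}} \] yields a parallelepiped with edge vectors $v_i=\lambda_iBu_i$ that is inscribed in $E$ and attains $L(P)=L_{\max}(E)$.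
   Context: A (centred, $n$-dimensional) parallelepiped with linearly independent edge vectors $v_1,\dots,v_n\in\mathbb{R}^n$ is $P=\{\sum_{i=1}^n t_iv_i : |t_i|\le \tfrac12\}$; its $2^n$ vertices are $\tfrac12\sum_i\varepsilon_iv_i$, $\varepsilon\in\{\pm1\}^n$. $P$ is inscribed in $E$ if all its vertices satisfy $x^{\top}A^{-1}x=1$. The total edge length (total $1$-dimensional measure of the $1$-skeleton) is $L(P)=2^{n-1}\sum_{i=1}^n\|v_i\|$. *)

From HB Require Import structures.
From mathcomp Require Import all_boot all_order all_algebra.
From mathcomp Require Import reals.
Set Implicit Arguments. Unset Strict Implicit. Unset Printing Implicit Defensive.
Import Order.TTheory GRing.Theory Num.Theory.
Local Open Scope ring_scope.

Section Defs.
Variables (R : realType) (n : nat).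

Definition qform (M : 'M[R]_n) (x : 'cV[R]_n) : R := (x^T *m M *m x) 0 0.

Definition enorm (x : 'cV[R]_n) : R := Num.sqrt ((x^T *m x) 0 0).

Definition sym_posdef (M : 'M[R]_n) : Prop :=
  M^T = M /\ forall x : 'cV[R]_n, x != 0 -> 0 < qform M x.

Definition orthogonal_mx (U : 'M[R]_n) : Prop := U^T *m U = 1%:M.

(* The parallelepiped P is given by the matrix V whose i-th column is the
   edge vector v_i; linear independence of the v_i is V \in unitmx. *)
Definition edge (V : 'M[R]_n) (i : 'I_n) : 'cV[R]_n := col i V.

Definition sgn (b : bool) : R := if b then 1 else -1.

Definition vertex (V : 'M[R]_n) (e : 'I_n -> bool) : 'cV[R]_n :=
  2^-1 *: \sum_(i < n) sgn (e i) *: edge V i.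

Definition inscribed (A V : 'M[R]_n) : Prop :=
  forall e : 'I_n -> bool, qform (invmx A) (vertex V e) = 1.

Definition edge_length (V : 'M[R]_n) : R :=
  2 ^+ n.-1 * \sum_(i < n) enorm (edge V i).

Definition Lmax (A : 'M[R]_n) : R := 2 ^+ n * Num.sqrt (\tr A).

End Defs.

From HB Require Import structures.
From mathcomp Require Import all_boot all_order all_algebra.
From mathcomp Require Import reals ring lra.
Set Implicit Arguments. Unset Strict Implicit. Unset Printing Implicit Defensive.
Import Order.TTheory GRing.Theory Num.Theory.
Local Open Scope ring_scope.

(* Write the edge matrix as V = B W.  Since B A^-1 B = 1, the vertex
   (1/2) V s lies on E iff s^T (W^T W) s = 4, so the quadratic form of the
   Gram matrix W^T W is constant on the sign vectors s in {+1,-1}^n.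
   Comparing the four sign vectors that differ only in two coordinates i, j
   kills the entry (i, j): W^T W is diagonal with trace 4, i.e.
   W = U diag(lam) with U orthogonal and sum lam_i^2 = 4.  Then
   |v_i| = lam_i |B u_i| = lam_i sqrt(u_i^T A u_i) and
   sum_i u_i^T A u_i = tr A, so Cauchy-Schwarz gives
   sum_i |v_i| <= 2 sqrt(tr A), with equality iff lam is proportional to
   (sqrt(u_i^T A u_i))_i. *)

Section CauchySchwarz.
Context {R : rcfType} {I : finType} (a b : I -> R).

Lemma cauchy_schwarz_gap :
  \sum_i ((\sum_j b j ^+ 2) * a i - (\sum_j a j * b j) * b i) ^+ 2 =
  (\sum_j b j ^+ 2) *
    ((\sum_j a j ^+ 2) * (\sum_j b j ^+ 2) - (\sum_j a j * b j) ^+ 2).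
Proof.
have -> : forall T P, \sum_i (T * a i - P * b i) ^+ 2 =
    T ^+ 2 * \sum_i a i ^+ 2 - 2 * T * P * \sum_i a i * b i
    + P ^+ 2 * \sum_i b i ^+ 2.
  move=> T P; rewrite !mulr_sumr -sumrB -big_split /=.
  by apply: eq_bigr => i _; ring.
ring.
Qed.

Lemma cauchy_schwarz_sqr :
  (\sum_i a i * b i) ^+ 2 <= (\sum_i a i ^+ 2) * (\sum_i b i ^+ 2).
Proof.
have T0 : 0 <= \sum_i b i ^+ 2 by apply: sumr_ge0 => i _; exact: sqr_ge0.
have [Tz|Tnz] := eqVneq (\sum_i b i ^+ 2) 0.
  have b0 i : b i = 0.
    apply/eqP; rewrite -sqrf_eq0; apply/eqP.
    by apply: (psumr_eq0P _ Tz) => // j _; exact: sqr_ge0.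
  by rewrite Tz mulr0 big1 ?expr0n // => i _; rewrite b0 mulr0.
have Tpos : 0 < \sum_i b i ^+ 2 by rewrite lt_def Tnz T0.
rewrite -subr_ge0 -(pmulr_rge0 _ Tpos) -cauchy_schwarz_gap.
by apply: sumr_ge0 => i _; exact: sqr_ge0.
Qed.

Lemma cauchy_schwarz :
  \sum_i a i * b i <=
  Num.sqrt (\sum_i a i ^+ 2) * Num.sqrt (\sum_i b i ^+ 2).
Proof.
rewrite -sqrtrM; last by apply: sumr_ge0 => i _; exact: sqr_ge0.
apply: le_trans (ler_norm _) _.
rewrite -sqrtr_sqr ler_sqrt ?cauchy_schwarz_sqr //.
by apply: mulr_ge0; apply: sumr_ge0 => i _; exact: sqr_ge0.
Qed.

Lemma cauchy_schwarz_eq : 0 < \sum_i b i ^+ 2 ->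
  \sum_i a i * b i = Num.sqrt (\sum_i a i ^+ 2) * Num.sqrt (\sum_i b i ^+ 2) <->
  exists2 c, 0 <= c & forall i, a i = c * b i.
Proof.
set T := \sum_i b i ^+ 2; set S := \sum_i a i ^+ 2; set P := \sum_i a i * b i.
move=> Tpos; have T0 := ltW Tpos; have Tnz := lt0r_neq0 Tpos.
have S0 : 0 <= S by apply: sumr_ge0 => i _; exact: sqr_ge0.
split=> [HP|[c c0 Hc]].
  have P0 : 0 <= P by rewrite HP mulr_ge0 ?sqrtr_ge0.
  have gap0 : \sum_i (T * a i - P * b i) ^+ 2 = 0.
    rewrite cauchy_schwarz_gap -/T -/S -/P HP exprMn !sqr_sqrtr //.
    by rewrite subrr mulr0.
  exists (P / T) => [|i]; first by rewrite divr_ge0.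
  have /eqP : (T * a i - P * b i) ^+ 2 = 0.
    by apply: (psumr_eq0P _ gap0) => // j _; exact: sqr_ge0.
  rewrite sqrf_eq0 subr_eq0 => /eqP Hi.
  by apply: (mulfI Tnz); rewrite Hi; field.
have -> : P = c * T.
  by rewrite /P /T mulr_sumr; apply: eq_bigr => i _; rewrite Hc; ring.
have -> : S = c ^+ 2 * T.
  by rewrite /S /T mulr_sumr; apply: eq_bigr => i _; rewrite Hc; ring.
by rewrite sqrtrM ?sqr_ge0 // sqrtr_sqr ger0_norm // -mulrA -expr2 sqr_sqrtr.
Qed.

End CauchySchwarz.

Section Parallelepipeds.
Context {R : realType} {n : nat}.
Implicit Types (A B G M P U V W : 'M[R]_n) (x y : 'cV[R]_n).

Definition bform G x y : R := (x^T *m G *m y) 0 0.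

Lemma bformDl G x y z : bform G (x + y) z = bform G x z + bform G y z.
Proof. by rewrite /bform linearD /= !mulmxDl mxE. Qed.

Lemma bformDr G x y z : bform G z (x + y) = bform G z x + bform G z y.
Proof. by rewrite /bform !mulmxDr mxE. Qed.

Lemma bformZl G c x z : bform G (c *: x) z = c * bform G x z.
Proof. by rewrite /bform linearZ /= -!scalemxAl mxE. Qed.

Lemma bformZr G c x z : bform G z (c *: x) = c * bform G z x.
Proof. by rewrite /bform -!scalemxAr mxE. Qed.

Lemma bform_delta G i j : bform G (delta_mx i 0) (delta_mx j 0) = G i j.
Proof. by rewrite /bform trmx_delta -rowE -colE !mxE. Qed.

Lemma qformZ M c x : qform M (c *: x) = c ^+ 2 * qform M x.
Proof. by rewrite /qform !linearZ /= -!scalemxAl scalerA mxE expr2. Qed.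

Lemma qform_mulmx M P x : qform M (P *m x) = qform (P^T *m M *m P) x.
Proof. by rewrite /qform trmx_mul !mulmxA. Qed.

Lemma qform_col M P i : qform M (col i P) = (P^T *m M *m P) i i.
Proof. by rewrite colE qform_mulmx -[_ i i](bform_delta). Qed.

Lemma qform_diag G x : is_diag_mx G -> qform G x = \sum_k x k 0 ^+ 2 * G k k.
Proof.
move=> /is_diag_mxP Gd; rewrite /qform mxE; apply: eq_bigr => k _.
rewrite mxE (bigD1 k) //= big1 ?addr0; first by rewrite !mxE expr2; ring.
by move=> l lk; rewrite Gd ?mulr0 // eq_sym.
Qed.

Definition signv (e : 'I_n -> bool) : 'cV[R]_n := \col_k sgn R (e k).

Lemma vertexE V e : vertex V e = 2^-1 *: (V *m signv e).
Proof.
apply/matrixP => k l; rewrite !mxE summxE; congr (_ * _).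
by apply: eq_bigr => j _; rewrite !mxE mulrC.
Qed.

Lemma inscribedE A V :
  inscribed A V <-> forall e, qform (V^T *m invmx A *m V) (signv e) = 4.
Proof.
by split=> h e; have := h e; rewrite vertexE qformZ qform_mulmx => ?; lra.
Qed.

Lemma qform_signv_diag G e : is_diag_mx G -> qform G (signv e) = \tr G.
Proof.
move=> Gd; rewrite qform_diag //; apply: eq_bigr => k _.
by rewrite mxE; case: (e k); rewrite /sgn /= ?sqrrN expr1n mul1r.
Qed.

(* Four sign vectors agreeing off [i, j] and taking all signs at [i, j]:
   the alternating sum of their quadratic forms is [8 G i j]. *)
Lemma signv_qform_const_diag G c :
  G^T = G -> (forall e, qform G (signv e) = c) -> is_diag_mx G.
Proof.
move=> GT Hc; apply/is_diag_mxP => i j ij; have {}ij : i != j by [].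
pose t : 'cV[R]_n := \col_k (if (k == i) || (k == j) then 0 else 1).
pose eab a b (k : 'I_n) := if k == i then a else if k == j then b else true.
have Es a b : signv (eab a b) =
    t + sgn R a *: delta_mx i 0 + sgn R b *: delta_mx j 0.
  apply/matrixP => k l; rewrite (ord1 l) !mxE /eab.
  case: (k =P i) => [->|ki]; first by rewrite eqxx (negbTE ij) /=; ring.
  by case: (k =P j) => [_|kj] /=; ring.
have Gji : G j i = G i j by rewrite -[in RHS]GT mxE.
have := Hc (eab true true); have := Hc (eab true false).
have := Hc (eab false true); have := Hc (eab false false).
rewrite !Es /qform -!/(bform _ _ _) !bformDl !bformDr !bformZl !bformZr.
by rewrite !bform_delta Gji /sgn; lra.
Qed.

Lemma sym_posdef1 : sym_posdef (1%:M : 'M[R]_n).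
Proof.
split=> [|x x0]; first exact: trmx1.
have [k xk] : exists k, x k 0 != 0.
  apply/existsP; apply: contraNT x0 => /existsPn x0.
  apply/eqP/matrixP => k l; rewrite (ord1 l) mxE; apply/eqP.
  by move: (x0 k); rewrite negbK.
rewrite qform_diag ?scalar_mx_is_diag // (bigD1 k) //= mxE eqxx mulr1.
apply: ltr_wpDr; last by rewrite lt_def sqr_ge0 sqrf_eq0 xk.
by apply: sumr_ge0 => l _; rewrite mxE eqxx mulr1 sqr_ge0.
Qed.

Lemma posdef_unitmx M : sym_posdef M -> M \in unitmx.
Proof.
case=> _ Mpos; rewrite unitmxE unitfE; apply/negP => /det0P [v v0 vM].
have := Mpos v^T; rewrite trmx_eq0 v0 => /(_ isT).
by rewrite /qform trmxK vM mul0mx mxE ltxx.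
Qed.

Lemma posdef_congr M P :
  sym_posdef M -> P \in unitmx -> sym_posdef (P^T *m M *m P).
Proof.
case=> MT Mpos Pu; split=> [|x x0]; first by rewrite !trmx_mul trmxK MT mulmxA.
rewrite -qform_mulmx; apply: Mpos; apply: contra x0 => /eqP Px0.
by rewrite -(mulKmx Pu x) Px0 mulmx0.
Qed.

Lemma posdef_diag_gt0 M i : sym_posdef M -> 0 < M i i.
Proof.
case=> _ Mpos; rewrite -bform_delta; apply: Mpos.
by apply/eqP => /matrixP/(_ i 0); rewrite !mxE !eqxx => /eqP; rewrite oner_eq0.
Qed.

Lemma posdef_qform_col_gt0 M P i :
  sym_posdef M -> P \in unitmx -> 0 < qform M (col i P).
Proof.
by move=> Mpos Pu; rewrite qform_col; apply/posdef_diag_gt0/posdef_congr.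
Qed.

Lemma posdef_mxtrace_gt0 M : (0 < n)%N -> sym_posdef M -> 0 < \tr M.
Proof.
move=> n0 Mpos; rewrite /mxtrace (bigD1 (Ordinal n0)) //=.
apply: ltr_wpDr; last exact: posdef_diag_gt0.
by apply: sumr_ge0 => i _; exact/ltW/posdef_diag_gt0.
Qed.

Lemma orthogonal_mx_unit U : orthogonal_mx U -> U \in unitmx.
Proof. by case/mulmx1_unit. Qed.

Lemma sum_qform_orthogonal_col M U :
  orthogonal_mx U -> \sum_i qform M (col i U) = \tr M.
Proof.
move=> UU; under eq_bigr do rewrite qform_col.
by rewrite -/(mxtrace _) -mulmxA mxtrace_mulC -mulmxA (mulmx1C UU) mulmx1.
Qed.

Lemma orthogonal_col_factor W : W \in unitmx -> is_diag_mx (W^T *m W) ->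
  exists U (lam : 'I_n -> R), [/\ orthogonal_mx U, forall i, 0 < lam i,
    forall i, lam i ^+ 2 = (W^T *m W) i i &
    forall i, col i W = lam i *: col i U].
Proof.
move=> Wu /is_diag_mxP Gd; set G := W^T *m W.
have Gpos i : 0 < G i i.
  by have := posdef_congr sym_posdef1 Wu; rewrite mulmx1 => /posdef_diag_gt0.
pose lam i := Num.sqrt (G i i).
have lam_neq0 i : lam i != 0 by rewrite lt0r_neq0 ?sqrtr_gt0.
have lam2 i : lam i ^+ 2 = G i i by rewrite sqr_sqrtr ?ltW.
exists (\matrix_(l, k) (W l k / lam k)), lam; split=> // [|i|i].
- apply/matrixP => i j; transitivity (G i j / lam i / lam j).
    rewrite !mxE !mulr_suml; apply: eq_bigr => l _; rewrite !mxE; ring.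
  rewrite [in RHS]mxE; case: (i =P j) => [<-|ij].
    by rewrite -lam2 /=; field.
  by rewrite Gd ?mul0r //; apply/eqP => /ord_inj.
- by rewrite sqrtr_gt0.
- by apply/matrixP => k l; rewrite !mxE mulrC divfK.
Qed.

Lemma sqrt_invmx_congr A B : B^T = B -> B \in unitmx -> B *m B = A ->
  B^T *m invmx A *m B = 1%:M.
Proof.
move=> BT Bu BB; have Au : A \in unitmx by rewrite -BB unitmx_mul Bu.
rewrite BT -{1}[B](mulKmx Bu B) BB -(mulmxA (invmx B) A) mulmxV // mulmx1.
exact: mulVmx.
Qed.

Lemma gram_invmx_sqrt A B W : B^T = B -> B \in unitmx -> B *m B = A ->
  (B *m W)^T *m invmx A *m (B *m W) = W^T *m W.
Proof.
move=> BT Bu BB; transitivity (W^T *m (B^T *m invmx A *m B) *m W).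
  by rewrite trmx_mul !mulmxA.
by rewrite sqrt_invmx_congr // mulmx1.
Qed.

Lemma unit_inscribedP A B V : B^T = B -> B \in unitmx -> B *m B = A ->
  V \in unitmx /\ inscribed A V <->
  exists U (lam : 'I_n -> R), [/\ orthogonal_mx U, forall i, 0 < lam i,
    \sum_i lam i ^+ 2 = 4 & forall i, edge V i = lam i *: (B *m col i U)].
Proof.
move=> BT Bu BB; split=> [[Vu /inscribedE Vin]|[U [lam [UU lam0 lam2 eV]]]].
  pose W := invmx B *m V; have VW : V = B *m W by rewrite mulKVmx.
  have Wu : W \in unitmx by rewrite unitmx_mul unitmx_inv Bu Vu.
  rewrite VW gram_invmx_sqrt // in Vin.
  have Wd : is_diag_mx (W^T *m W).
    by apply: signv_qform_const_diag Vin; rewrite trmx_mul trmxK.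
  have [U [lam [UU lam0 lam2 WU]]] := orthogonal_col_factor Wu Wd.
  exists U, lam; split=> // [|i].
    under eq_bigr do rewrite lam2.
    by rewrite -/(mxtrace _) -(qform_signv_diag (fun=> true) Wd).
  by rewrite /edge VW colE -mulmxA -colE WU scalemxAr.
pose D := diag_mx (\row_i lam i).
have VUD : V = B *m (U *m D).
  apply/matrixP => k i; move/matrixP: (eV i) => /(_ k 0).
  rewrite /edge !mxE => ->.
  by rewrite mulr_sumr; apply: eq_bigr => j _; rewrite mul_mx_diag !mxE; ring.
have Du : D \in unitmx.
  rewrite unitmxE det_diag unitfE lt0r_neq0 //.
  by apply: prodr_gt0 => i _; rewrite mxE.
split; first by rewrite VUD !unitmx_mul Bu orthogonal_mx_unit.
apply/inscribedE => e; rewrite VUD gram_invmx_sqrt //.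
have -> : (U *m D)^T *m (U *m D) = D *m D.
  by rewrite trmx_mul tr_diag_mx -mulmxA (mulmxA U^T) UU mul1mx.
rewrite mulmx_diag qform_signv_diag ?diag_mx_is_diag // mxtrace_diag -lam2.
by apply: eq_bigr => i _; rewrite !mxE expr2.
Qed.

Lemma enormE x : enorm x = Num.sqrt (qform 1%:M x).
Proof. by rewrite /qform mulmx1. Qed.

Lemma enormZ c x : enorm (c *: x) = `|c| * enorm x.
Proof. by rewrite !enormE qformZ sqrtrM ?sqr_ge0 // sqrtr_sqr. Qed.

Lemma enorm_sqrt_mx A B x : B^T = B -> B *m B = A ->
  enorm (B *m x) = Num.sqrt (qform A x).
Proof. by move=> BT BB; rewrite enormE qform_mulmx mulmx1 BT BB. Qed.

Lemma edge_length_sum A B V U lam : B^T = B -> B *m B = A ->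
  (forall i, 0 <= lam i) -> (forall i, edge V i = lam i *: (B *m col i U)) ->
  edge_length V = 2 ^+ n.-1 * \sum_i lam i * Num.sqrt (qform A (col i U)).
Proof.
move=> BT BB lam0 eV; rewrite /edge_length; congr (_ * _).
apply: eq_bigr => i _.
by rewrite eV enormZ ger0_norm // (enorm_sqrt_mx _ BT BB).
Qed.

Lemma edge_length_orthogonal A B V U lam :
  (0 < n)%N -> sym_posdef A -> B^T = B -> B *m B = A -> orthogonal_mx U ->
  (forall i, 0 < lam i) -> \sum_i lam i ^+ 2 = 4 ->
  (forall i, edge V i = lam i *: (B *m col i U)) ->
  edge_length V <= Lmax A /\
  (edge_length V = Lmax A <->
   exists c, forall i, lam i = c * Num.sqrt (qform A (col i U))).
Proof.
move=> n0 Apos BT BB UU lam0 lam2 eV.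
pose s i := Num.sqrt (qform A (col i U)).
have q0 i : 0 < qform A (col i U).
  exact/posdef_qform_col_gt0/orthogonal_mx_unit.
have s2 : \sum_i s i ^+ 2 = \tr A.
  rewrite -(sum_qform_orthogonal_col A UU).
  by apply: eq_bigr => i _; rewrite sqr_sqrtr ?ltW.
have s2_gt0 : 0 < \sum_i s i ^+ 2 by rewrite s2 posdef_mxtrace_gt0.
have LmaxCS : Lmax A =
    2 ^+ n.-1 * (Num.sqrt (\sum_i lam i ^+ 2) * Num.sqrt (\sum_i s i ^+ 2)).
  rewrite lam2 s2 /Lmax -{1}(prednK n0) exprS -mulrA mulrCA.
  congr (_ * (_ * _)).
  have -> : (4 : R) = 2 ^+ 2 by ring.
  by rewrite sqrtr_sqr ger0_norm.
have pow2_gt0 : 0 < (2 : R) ^+ n.-1 by rewrite exprn_gt0.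
rewrite (edge_length_sum BT BB (fun i => ltW (lam0 i)) eV) LmaxCS.
split; first by rewrite ler_pM2l // cauchy_schwarz.
split=> [/(mulfI (lt0r_neq0 pow2_gt0))|[c Hc]].
  by case/(cauchy_schwarz_eq _ s2_gt0) => c _ Hc; exists c.
congr (_ * _); apply/(cauchy_schwarz_eq _ s2_gt0); exists c => //.
by apply: ltW; have := lam0 (Ordinal n0); rewrite Hc pmulr_lgt0 // sqrtr_gt0 q0.
Qed.

End Parallelepipeds.

Theorem theorem3p1 (R : realType) (n : nat) (A B : 'M[R]_n) :
  (2 <= n)%N ->
  sym_posdef A ->
  (* B = A^{1/2}: the symmetric positive definite square root of A *)
  sym_posdef B -> B *m B = A ->
  (* (i) upper bound *)
  (forall V : 'M[R]_n, V \in unitmx -> inscribed A V ->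
     edge_length V <= Lmax A)
  /\
  (* (ii) characterization of equality *)
  (forall V : 'M[R]_n, V \in unitmx -> inscribed A V ->
     (edge_length V = Lmax A <->
      exists (U : 'M[R]_n) (lam : 'I_n -> R),
        [/\ orthogonal_mx U,
            forall i, 0 < lam i,
            \sum_(i < n) lam i ^+ 2 = 4,
            (exists c : R, forall i,
                 lam i = c * Num.sqrt (qform A (col i U)))
          & forall i, edge V i = lam i *: (B *m col i U)]))
  /\
  (* (iii) the explicit extremal choice *)
  (forall U : 'M[R]_n, orthogonal_mx U ->
     let lam := fun i : 'I_n =>
       2 * Num.sqrt (qform A (col i U)) / Num.sqrt (\tr A) in
     let V := \matrix_(j < n, i < n) (lam i *: (B *m col i U)) j 0 in
     [/\ V \in unitmx, inscribed A V & edge_length V = Lmax A]).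
Proof.
move=> n2 Apos Bpos BB; have [BT _] := Bpos; have Bu := posdef_unitmx Bpos.
have n0 : (0 < n)%N := ltnW n2.
have bound V U lam := @edge_length_orthogonal R n A B V U lam n0 Apos BT BB.
have decomp V := unit_inscribedP V BT Bu BB.
split; [|split].
- move=> V Vu Vin.
  have [U [lam [UU lam0 lam2 eV]]] := (decomp V).1 (conj Vu Vin).
  exact: (bound V U lam UU lam0 lam2 eV).1.
- move=> V Vu Vin; split=> [Veq|[U [lam [UU lam0 lam2 Hc eV]]]].
    have [U [lam [UU lam0 lam2 eV]]] := (decomp V).1 (conj Vu Vin).
    by exists U, lam; split=> //; apply/(bound V U lam UU lam0 lam2 eV).2.
  exact/(bound V U lam UU lam0 lam2 eV).2.
move=> U UU lam V.
have trA_gt0 := posdef_mxtrace_gt0 n0 Apos.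
have q0 i : 0 < qform A (col i U).
  exact/posdef_qform_col_gt0/orthogonal_mx_unit.
have lam0 i : 0 < lam i by rewrite divr_gt0 ?mulr_gt0 ?sqrtr_gt0.
have lam2 : \sum_i lam i ^+ 2 = 4.
  transitivity (4 * (\sum_i qform A (col i U)) / \tr A).
    rewrite mulr_sumr mulr_suml; apply: eq_bigr => i _.
    by rewrite expr_div_n exprMn !sqr_sqrtr ?ltW //; ring.
  by rewrite sum_qform_orthogonal_col // mulfK // lt0r_neq0.
have eV i : edge V i = lam i *: (B *m col i U).
  by apply/matrixP => k l; rewrite (ord1 l) !mxE.
have [Vu Vin] : V \in unitmx /\ inscribed A V by apply/decomp; exists U, lam.
split=> //; apply/(bound V U lam UU lam0 lam2 eV).2.
by exists (2 / Num.sqrt (\tr A)) => i; rewrite /lam mulrAC.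
Qed.
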